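(* If $G$ is a connected locally Dirac graph of order at least $4$, then $G$ is $3$-connected.
   Context: A graph $G$ is locally Dirac if for every vertex $v \in V(G)$ and every $u \in N(v)$, $\deg_{\langle N(v)\rangle}(u) \ge \deg_G(v)/2$, where $N(v)$ is the open neighbourhood of $v$ and $\langle N(v)\rangle$ the subgraph induced by it. *)

From mathcomp Require Import all_boot.
Set Implicit Arguments. Unset Strict Implicit. Unset Printing Implicit Defensive.

Definition simple_graph (T : finType) (e : rel T) : Prop :=
  symmetric e /\ irreflexive e.

Definition nbhd (T : finType) (e : rel T) (v : T) : {set T} := [set u | e v u].

Definition deg (T : finType) (e : rel T) (v : T) : nat := #|nbhd e v|.

Definition deg_in_nbhd (T : finType) (e : rel T) (v u : T) : nat :=
  #|[set w in nbhd e v | e u w]|.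

(* locally Dirac: for all v and u in N(v), deg_<N(v)>(u) >= deg_G(v)/2
   (stated without division: 2 * deg_<N(v)>(u) >= deg_G(v)) *)
Definition locally_dirac (T : finType) (e : rel T) : Prop :=
  forall v u : T, u \in nbhd e v -> deg e v <= 2 * deg_in_nbhd e v u.

Definition connected (T : finType) (e : rel T) : Prop :=
  forall x y : T, connect e x y.

Definition connected_without (T : finType) (e : rel T) (S : {set T}) : Prop :=
  forall x y : T, x \notin S -> y \notin S ->
    connect [rel a b | e a b && (a \notin S) && (b \notin S)] x y.

Definition k_connected (k : nat) (T : finType) (e : rel T) : Prop :=
  k < #|T| /\ forall S : {set T}, #|S| < k -> connected_without e S.

From mathcomp Require Import all_boot.
From mathcomp Require Import zify.

Set Implicit Arguments. Unset Strict Implicit. Unset Printing Implicit Defensive.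

(** Let S be a set of at most two vertices.  The locally Dirac condition forces
    any two non-adjacent neighbours a, b of a vertex s to share at least half
    of the remaining deg(s) - 2 neighbours of s each, hence at least two common
    neighbours; so if s lies in S, at most one of them is lost, and a, b stay
    joined in G - S.  Likewise two adjacent vertices of S have a common
    neighbour outside S.  Thus the vertices outside S reachable from x in
    G - S, together with the vertices of S adjacent to them, form a set closed
    under adjacency; as G is connected it contains every vertex. *)

Section LocallyDirac.

Variables (T : finType) (e : rel T).
Hypotheses (e_sym : symmetric e) (e_irr : irreflexive e).
Hypothesis e_dirac : locally_dirac e.

Lemma common_nbhd_card_gt1 s a b :
  e s a -> e s b -> a != b -> ~~ e a b ->
  1 < #|[set w in nbhd e s | e a w && e b w]|.
Proof.
move=> esa esb neq_ab not_eab.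
set NA := [set w in nbhd e s | e a w]; set NB := [set w in nbhd e s | e b w].
have -> : [set w in nbhd e s | e a w && e b w] = NA :&: NB.
  by apply/setP => w; rewrite !inE andbACA andbb.
have degA : deg e s <= 2 * #|NA| by apply: e_dirac; rewrite inE.
have degB : deg e s <= 2 * #|NB| by apply: e_dirac; rewrite inE.
have sub_NAB : NA :|: NB \subset nbhd e s :\ a :\ b.
  apply/subsetP => w; rewrite !inE => /orP[] /andP[-> ew]; rewrite andbT;
  by apply/andP; split; apply/eqP => eq_w; move: ew;
     rewrite eq_w ?e_irr ?(e_sym b) ?(negbTE not_eab).
have card_rest : #|nbhd e s :\ a :\ b| + 2 = deg e s.
  have := cardsD1 a (nbhd e s); have := cardsD1 b (nbhd e s :\ a).
  by rewrite /deg !inE esa esb eq_sym neq_ab /=; lia.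
have := cardsUI NA NB; have := subset_leq_card sub_NAB; lia.
Qed.

Variable S : {set T}.
Hypothesis S_small : #|S| < 3.

Let avoid := [rel a b | e a b && (a \notin S) && (b \notin S)].

Lemma nbhd_connect_avoid s a b :
  s \in S -> e s a -> e s b -> a \notin S -> b \notin S -> connect avoid a b.
Proof.
move=> sS esa esb aS bS.
have [<- | neq_ab] := eqVneq a b; first exact: connect0.
have [eab | not_eab] := boolP (e a b); first by apply: connect1; rewrite /= eab aS bS.
set I := [set w in nbhd e s | e a w && e b w].
have I_gt1 : 1 < #|I| := common_nbhd_card_gt1 esa esb neq_ab not_eab.
have IS_le1 : #|I :&: S| <= 1.
  have: I :&: S \subset S :\ s.
    apply/subsetP => w; rewrite !inE => /andP[/andP[esw _] ->].
    by rewrite andbT; apply: contraTneq esw => ->; rewrite e_irr.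
  by move/subset_leq_card; have := cardsD1 s S; rewrite sS; lia.
have /card_gt0P[c] : 0 < #|I :\: S| by have := cardsID S I; lia.
rewrite !inE => /andP[cS /andP[_ /andP[eac ebc]]].
apply: (@connect_trans _ _ c); apply: connect1; first by rewrite /= eac aS cS.
by rewrite /= e_sym ebc bS cS.
Qed.

Lemma adjacent_in_S_common_nbr u w :
  u \in S -> w \in S -> e u w -> exists2 c, e u c && e w c & c \notin S.
Proof.
move=> uS wS euw.
have deg_w : 0 < deg e w by apply/card_gt0P; exists u; rewrite inE e_sym.
have dirac_wu : deg e w <= 2 * deg_in_nbhd e w u by apply: e_dirac; rewrite inE e_sym.
have /card_gt0P[c] : 0 < deg_in_nbhd e w u by lia.
rewrite !inE => /andP[ewc euc].
exists c; first by rewrite euc ewc.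
apply/negP => cS.
have neq_uw : u != w by apply: contraTneq euw => ->; rewrite e_irr.
have neq_cu : c != u by apply: contraTneq euc => ->; rewrite e_irr.
have neq_cw : c != w by apply: contraTneq ewc => ->; rewrite e_irr.
have : c |: [set u; w] \subset S.
  by apply/subsetP => z; rewrite !inE => /or3P[] /eqP ->.
move/subset_leq_card; rewrite cardsU1 cards2 !inE neq_uw negb_or neq_cu neq_cw.
by move: S_small; lia.
Qed.

Variable x : T.

Definition reach_avoid : {pred T} :=
  [pred w | if w \in S then [exists a, [&& e w a, a \notin S & connect avoid x a]]
            else connect avoid x w].

Lemma reach_avoid_closed : closed e reach_avoid.
Proof.
apply: intro_closed; first exact: sym_connect_sym.
move=> u w euw; rewrite !inE; case: ifP => uS.
  case/existsP => a /and3P[eua aS xa].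
  case: ifP => wS; last first.
    by apply: connect_trans xa (nbhd_connect_avoid uS eua euw aS _); rewrite wS.
  have [c /andP[euc ewc] cS] := adjacent_in_S_common_nbr uS wS euw.
  apply/existsP; exists c; rewrite ewc cS.
  exact: connect_trans xa (nbhd_connect_avoid uS eua euc aS cS).
move=> xu; case: ifP => wS.
  by apply/existsP; exists u; rewrite e_sym euw uS xu.
by apply: connect_trans xu (connect1 _); rewrite /= euw uS wS.
Qed.

End LocallyDirac.

Theorem mainTheorem5 (T : finType) (e : rel T) :
  simple_graph e -> connected e -> locally_dirac e -> 4 <= #|T| ->
  k_connected 3 e.
Proof.
move=> [e_sym e_irr] e_conn e_dirac card_T; split=> // S S_small x y xS yS.
have x_reach : x \in reach_avoid e S x by rewrite inE (negbTE xS).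
have reach_closed := reach_avoid_closed e_sym e_irr e_dirac S_small x.
rewrite (closed_connect reach_closed (e_conn x y)) in x_reach.
by move: x_reach; rewrite inE (negbTE yS).
Qed.
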